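(* Let $a,b\in\mathbb{Q}^*$ be multiplicatively independent. Then the set of primes $p$ with $\operatorname{ord}_p(a)=\operatorname{ord}_p(b)=0$ such that $(b \bmod p)$ lies in the subgroup $\langle a \bmod p\rangle$ of $\mathbb{F}_p^*$ is infinite.
   Context: Elements $a,b\in\mathbb{Q}^*$ are multiplicatively independent if there are no integers $x,y$, not both zero, with $a^xb^y=1$. For a prime $p$ and $x\in\mathbb{Q}^*$, $\operatorname{ord}_p(x)$ denotes the exponent of $p$ in $x$; when $\operatorname{ord}_p(x)=0$, $x \bmod p$ denotes the reduction of $x$ in $\mathbb{F}_p^*$. *)

From mathcomp Require Import all_boot all_order all_algebra.
Set Implicit Arguments. Unset Strict Implicit. Unset Printing Implicit Defensive.
Import Order.TTheory GRing.Theory Num.Theory.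

Local Open Scope ring_scope.

Definition ordp (p : nat) (x : rat) : int :=
  (logn p `|numq x|%N)%:Z - (logn p `|denq x|%N)%:Z.

(* Reduction of x modulo p in F_p (meaningful when ord_p(x) = 0). *)
Definition redp (p : nat) (x : rat) : 'F_p :=
  (numq x)%:~R / (denq x)%:~R.

Definition mult_indep (a b : rat) : Prop :=
  forall x y : int, a ^ x * b ^ y = 1 -> x = 0 /\ y = 0.

Definition in_cyclic_subgroup (p : nat) (v u : 'F_p) : Prop :=
  exists k : int, v ^ k = u.

From mathcomp Require Import all_boot all_order all_algebra cyclic.
From mathcomp Require Import ring lra.
Import Order.TTheory GRing.Theory Num.Theory.

Set Implicit Arguments.
Unset Strict Implicit.
Unset Printing Implicit Defensive.

Local Open Scope ring_scope.

(* Write a = r/s and b = t/u in lowest terms. Modulo a prime q not dividing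
   rstu, b is the k-th power of a as soon as q divides X k := r^k u - t s^k,
   the numerator of a^k - b; independence makes X k nonzero and unbounded.
   For K large, X (K + n) = c * Z n with Z n := A r^n - B s^n prime to rs:
   the primes shared by r and t (or by s and u) are absorbed into c. Euler's
   theorem gives Z n = Z 0 modulo m := |Z 0| * P, where P is the part of
   N! t u prime to rs, whenever 2 phi(m) divides n. Hence Z n = w * Z 0 with
   w = 1 modulo P, and |w| > 1 once n is large. A prime factor q of w is
   prime to P and to rs, so q > N and q divides none of r, s, t, u. *)

Lemma coprime_absz_sub (x y : int) (m : nat) : (0 < m)%N ->
  (forall p, prime p -> (p %| m)%N -> (p %| `|x|)%N) ->
  coprime `|y| m -> coprime `|x - y| m.
Proof.
move=> m_gt0 m_x y_m; rewrite /coprime eqn_leq gcdn_gt0 m_gt0 orbT andbT leqNgt.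
apply/negP => /pdiv_prime; set p := pdiv _ => pr_p.
have p_g : (p %| gcdn `|x - y| m)%N := pdiv_dvd _.
have p_m : (p %| m)%N := dvdn_trans p_g (dvdn_gcdr _ _).
have p_y : (p%:Z %| y)%Z.
  have p_xy : (p%:Z %| x - y)%Z by rewrite dvdzE (dvdn_trans p_g (dvdn_gcdl _ _)).
  by rewrite -[y](subKr x) rpredB // dvdzE m_x.
by have := coprime_dvdl p_y y_m; rewrite prime_coprime // p_m.
Qed.

Lemma pnat_dvd_expn (R n K : nat) : (0 < R)%N -> \pi(R).-nat n -> (n <= K)%N ->
  (n %| R ^ K)%N.
Proof.
move=> R_gt0 pi_n le_nK; have n_gt0 : (0 < n)%N by case/andP: pi_n.
apply/dvdn_partP => // p pi_p.
have pr_p : prime p by move: pi_p; rewrite mem_primes => /andP[].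
have p_R : (p %| R)%N by have := pnatPpi pi_n pi_p; rewrite mem_primes => /and3P[].
rewrite p_part; apply: (@dvdn_trans (p ^ K)); last exact: dvdn_exp2r.
rewrite dvdn_exp2l // (leq_trans _ le_nK) //.
apply: leq_trans (ltnW (ltn_expl _ (prime_gt1 pr_p))) _.
by rewrite dvdn_leq // -p_part dvdn_part.
Qed.

Lemma split_common_part (r t : int) : r != 0 -> t != 0 ->
  exists K0 : nat, forall K, (K0 <= K)%N -> exists al rho t1 : int,
    [/\ al != 0, t = al * t1, r ^+ K = al * rho, coprime `|t1| `|r|
      & forall p, prime p -> (p %| `|r|)%N -> (p %| `|rho|)%N].
Proof.
move=> r0 t0; set R := `|r|%N; set T := `|t|%N.
have R_gt0 : (0 < R)%N by rewrite absz_gt0.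
have T_gt0 : (0 < T)%N by rewrite absz_gt0.
set al := (T`_\pi(R))%N; have al_gt0 : (0 < al)%N := part_gt0 _ _.
have pi_al : \pi(R).-nat al := part_pnat _ _.
exists (al * R)%N => K le_K.
have /dvdzP[t1 et] : (al%:Z %| t)%Z by rewrite dvdzE dvdn_part.
have /dvdzP[rho er] : (al%:Z %| r ^+ K)%Z.
  by rewrite dvdzE abszX pnat_dvd_expn // (leq_trans (leq_pmulr _ R_gt0)).
exists al%:Z, rho, t1; split; rewrite 1?mulrC //; first by rewrite eqz_nat -lt0n.
- have -> : `|t1|%N = (T`_\pi(R)^')%N.
    have e : (`|t1| * al = T)%N by rewrite /T et abszM.
    by rewrite -(mulnK `|t1| al_gt0) e -{1}(partnC \pi(R) T_gt0) mulKn.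
  exact: p'nat_coprime (part_pnat _ _) (pnat_pi R_gt0).
- move=> p pr_p p_R; have pi_alp : \pi(R).-nat (al * p).
    by rewrite pnatM pi_al pnatE // mem_primes pr_p R_gt0.
  have : (al * p %| R ^ K)%N.
    by rewrite pnat_dvd_expn // (leq_trans _ le_K) // leq_mul2l dvdn_leq ?orbT.
  by rewrite -abszX er abszM /= mulnC dvdn_pmul2r.
Qed.

(* The exponent is even so that the sign of x does not matter. *)
Lemma totient_dvdz_expr_sub1 (x : int) (m j : nat) : x != 0 -> coprime `|x| m ->
  (m%:Z %| x ^+ (2 * totient m * j) - 1)%Z.
Proof.
move=> x0 x_m; set e := (`|x| ^ totient m)%N.
have xE : x ^+ (2 * totient m * j) = (e ^ (2 * j))%N%:Z.
  rewrite -mulnA exprM -(real_normK (num_real x)) -exprM -abszE /e -expnM.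
  by rewrite mulnCA -!natz natrX.
have e_gt0 : (0 < e ^ (2 * j))%N by rewrite !expn_gt0 absz_gt0 x0.
have e1 : (e ^ (2 * j) == 1 %[mod m])%N.
  by rewrite -modnXm (Euler_exp_totient x_m) modnXm exp1n.
by rewrite xE -[1]/(Posz 1) (subzn e_gt0) dvdzE /= -eqn_mod_dvd.
Qed.

Lemma exists_prime_dvd_notdvd (y z : int) (P : nat) : z != 0 ->
  (y * P%:Z %| z - y)%Z -> `|z|%N != `|y|%N ->
  exists2 q, prime q & (q %| `|z|)%N && ~~ (q %| P)%N.
Proof.
move=> z0 yP_zy z_y.
have /dvdzP[w zE] : (y %| z)%Z.
  by rewrite -[z](subrK y) rpredD // (dvdz_trans (dvdz_mulr _ _) yP_zy).
have y0 : y != 0 by apply: contraNneq z0 => y0; rewrite zE y0 mulr0.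
have P_w1 : (P%:Z %| w - 1)%Z.
  by rewrite -(dvdz_mul2l y0) mulrBr mulr1 mulrC -zE.
have w_gt1 : (1 < `|w|)%N.
  have w0 : w != 0 by apply: contraNneq z0 => w0; rewrite zE w0 mul0r.
  have : (0 < `|w|)%N by rewrite absz_gt0.
  by move: z_y; rewrite zE abszM; case: `|w|%N => [|[|n]] //=; rewrite mul1n eqxx.
exists (pdiv `|w|); first exact: pdiv_prime.
rewrite zE abszM dvdn_mulr ?pdiv_dvd //=; apply/negP => q_P.
have q_w : ((pdiv `|w|)%:Z %| w)%Z by rewrite dvdzE pdiv_dvd.
have q_w1 : ((pdiv `|w|)%:Z %| w - 1)%Z by apply: dvdz_trans P_w1; rewrite dvdzE.
have := rpredB q_w q_w1; rewrite opprB addrC subrK dvdz1 /= => /eqP q1.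
by have := pdiv_prime w_gt1; rewrite q1.
Qed.

Section PowSub.

Variables r s t u : int.
Hypotheses (r0 : r != 0) (s0 : s != 0) (t0 : t != 0) (u0 : u != 0).
Hypothesis coprime_rs : coprime `|r| `|s|.

Local Notation X k := (r ^+ k * u - t * s ^+ k)%R.

Lemma pow_sub_split : exists (K : nat) (c A B : int),
  [/\ c != 0, forall n, X (K + n) = c * (A * r ^+ n - B * s ^+ n)
    & forall n, coprime `|(A * r ^+ n - B * s ^+ n)%R| (`|r| * `|s|)].
Proof.
have [Kr splitr] := split_common_part r0 t0.
have [Ks splits] := split_common_part s0 u0.
set K := maxn Kr Ks.
have [al [rho [t1 [al0 tE rE t1_r r_rho]]]] := splitr K (leq_maxl _ _).
have [be [sig [u1 [be0 uE sE u1_s s_sig]]]] := splits K (leq_maxr _ _).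
have rho_s : coprime `|rho| `|s|.
  apply: (@coprime_dvdl _ (`|r| ^ K)); last exact: coprimeXl.
  by rewrite -abszX rE abszM dvdn_mull.
have sig_r : coprime `|sig| `|r|.
  apply: (@coprime_dvdl _ (`|s| ^ K)); last by rewrite coprimeXl // coprime_sym.
  by rewrite -abszX sE abszM dvdn_mull.
have r_gt0 : (0 < `|r|)%N by rewrite absz_gt0.
have s_gt0 : (0 < `|s|)%N by rewrite absz_gt0.
exists K, (al * be), (rho * u1), (t1 * sig); split.
- by rewrite mulf_neq0.
- by move=> n; rewrite !exprD rE sE tE uE; ring.
- move=> n; rewrite coprimeMr; apply/andP; split.
  + apply: coprime_absz_sub => // [p pr_p p_r|].
      by rewrite !abszM -mulnA dvdn_mulr // r_rho.
    rewrite !abszM abszX !coprimeMl t1_r sig_r coprimeXl //.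
    by rewrite coprime_sym.
  + rewrite -abszN opprB; apply: coprime_absz_sub => // [p pr_p p_s|].
      by rewrite !abszM mulnAC dvdn_mull // s_sig.
    by rewrite !abszM abszX !coprimeMl rho_s u1_s coprimeXl.
Qed.

Lemma exists_large_prime_dvd_pow_sub (N : nat) :
  (forall k, X k != 0) ->
  (forall C : int, exists k0, forall k, (k0 <= k)%N -> C < `|X k|) ->
  exists k q, [/\ prime q, (N <= q)%N, ~~ (q %| `|(r * s * t * u)%R|)%N
                & (q %| `|X k|)%N].
Proof.
move=> X_neq0 X_grows.
have [K [c [A [B [c0 XE coprime_Z]]]]] := pow_sub_split.
pose Z n := A * r ^+ n - B * s ^+ n.
have XKE : X K = c * (A - B) by rewrite -[K]addn0 XE !expr0 !mulr1.
set y := A - B in XKE.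
set RS := (`|r| * `|s|)%N.
have RS_gt0 : (0 < RS)%N by rewrite muln_gt0 !absz_gt0 r0 s0.
set P := ((N`! * `|t| * `|u|)`_(\pi(RS))^')%N.
set m := (`|y| * P)%N.
have m_gt0 : (0 < m)%N.
  rewrite muln_gt0 part_gt0 absz_gt0 andbT.
  by apply: contraNneq (X_neq0 K) => y0; rewrite XKE y0 mulr0.
have coprime_m : coprime m RS.
  rewrite coprimeMl (_ : y = Z 0%N); last by rewrite /Z !expr0 !mulr1.
  by rewrite coprime_Z (p'nat_coprime (part_pnat _ _) (pnat_pi RS_gt0)).
have [k0 X_gt] := X_grows `|X K|.
set n := (2 * totient m * k0)%N.
have m_Zn : (m%:Z %| Z n - y)%Z.
  have -> : Z n - y = A * (r ^+ n - 1) - B * (s ^+ n - 1) by rewrite /Z /y; ring.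
  have [m_r m_s] : coprime `|r| m /\ coprime `|s| m.
    by move: coprime_m; rewrite coprime_sym coprimeMl => /andP[].
  by rewrite rpredB // dvdz_mull // totient_dvdz_expr_sub1.
have Zn_y : `|Z n|%N != `|y|%N.
  apply: contraTneq (X_gt (K + n)%N _) => [e|]; last first.
    rewrite (leq_trans _ (leq_addl _ _)) // leq_pmull //.
    by rewrite muln_gt0 totient_gt0 m_gt0.
  by rewrite XE XKE !normrM -!abszE -/(Z n) e ltxx.
have Zn0 : Z n != 0.
  by apply: contraNneq (X_neq0 (K + n)%N) => e; rewrite XE -/(Z n) e mulr0.
have yP_Zn : (y * P%:Z %| Z n - y)%Z by rewrite dvdzE abszM.
have [q pr_q /andP[q_Zn q_P]] := exists_prime_dvd_notdvd Zn0 yP_Zn Zn_y.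
have q_RS : ~~ (q %| RS)%N.
  by have := coprime_dvdl q_Zn (coprime_Z n); rewrite prime_coprime.
have NTU_gt0 : (0 < N`! * `|t| * `|u|)%N.
  by rewrite !muln_gt0 fact_gt0 !absz_gt0 t0 u0.
have q_NTU : ~~ (q %| N`! * `|t| * `|u|)%N.
  apply: contra q_P => q_NTU.
  have : q \in \pi(P).
    rewrite pi_of_part // inE /= !mem_primes pr_q NTU_gt0 q_NTU inE /=.
    by rewrite mem_primes (negbTE q_RS) !andbF.
  by rewrite mem_primes => /and3P[].
exists (K + n)%N, q; split => //.
- rewrite leqNgt; apply: contra q_NTU => lt_qN.
  by rewrite -mulnA dvdn_mulr // dvdn_fact // prime_gt0 // ltnW.
- move: q_RS q_NTU; rewrite /RS !abszM !Euclid_dvdM // !negb_or.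
  by move=> /andP[-> ->] /andP[/andP[_ ->] ->].
- by rewrite XE abszM dvdn_mull.
Qed.

End PowSub.

Lemma bernoulli_ineq (R : realDomainType) (h : R) (k : nat) :
  0 <= h -> 1 + k%:R * h <= (1 + h) ^+ k.
Proof.
move=> h_ge0; elim: k => [|k IHk]; first by rewrite mul0r addr0 expr0.
have hk_ge0 : 0 <= (1 + h) ^+ k by apply: exprn_ge0; lra.
have kh_ge0 : 0 <= k%:R * h by apply: mulr_ge0.
rewrite exprS -natr1; nra.
Qed.

Lemma norm_expr_unbounded (R : archiFieldType) (c C : R) : 1 < `|c| ->
  exists k0 : nat, forall k, (k0 <= k)%N -> C < `|c| ^+ k.
Proof.
move=> c_gt1; set h := `|c| - 1; have h_gt0 : 0 < h by rewrite subr_gt0.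
exists (Num.Def.archi_bound (`|C| / h)) => k le_k.
have C_lt : `|C| < k%:R * h.
  rewrite -ltr_pdivrMr //; apply: (lt_le_trans (archi_boundP _)).
    by rewrite divr_ge0 // ltW.
  by rewrite ler_nat.
have := bernoulli_ineq k (ltW h_gt0); rewrite (_ : 1 + h = `|c|).
  by have := ler_norm C; lra.
by rewrite /h addrC subrK.
Qed.

Definition pow_sub_num (a b : rat) (k : nat) : int :=
  numq a ^+ k * denq b - numq b * denq a ^+ k.

Lemma pow_sub_numE (a b : rat) (k : nat) :
  (pow_sub_num a b k)%:~R =
    (denq a)%:~R ^+ k * (denq b)%:~R * (a ^+ k - b) :> rat.
Proof.
rewrite /pow_sub_num rmorphB !rmorphM !rmorphXn /= (numqE a) (numqE b) exprMn.
by ring.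
Qed.

Lemma pow_sub_numEV (a b : rat) (k : nat) : a != 0 -> b != 0 ->
  (pow_sub_num a b k)%:~R =
    (numq a)%:~R ^+ k * (numq b)%:~R * (b^-1 - a^-1 ^+ k) :> rat.
Proof.
move=> a0 b0; rewrite /pow_sub_num rmorphB !rmorphM !rmorphXn /=.
rewrite (numqE a) (numqE b) exprVn !exprMn.
have ak0 : a ^+ k != 0 by rewrite expf_neq0.
by field; rewrite ak0 b0.
Qed.

Lemma pow_sub_num_unbounded (a b : rat) : a != 0 -> b != 0 -> `|a| != 1 ->
  forall C : int, exists k0, forall k, (k0 <= k)%N -> C < `|pow_sub_num a b k|.
Proof.
move=> a0 b0 a_neq1 C.
suff [k0 X_gt] : exists k0, forall k, (k0 <= k)%N ->
    C%:~R < `|(pow_sub_num a b k)%:~R : rat|.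
  by exists k0 => k /X_gt; rewrite -intr_norm ltr_int.
have lower_bound (m c d : rat) k : m \is a Num.int -> m != 0 ->
    C%:~R + `|d| < `|c| ^+ k -> C%:~R < `|m * (c ^+ k - d)|.
  move=> m_int m0 c_gt; have m_ge1 : 1 <= `|m| by apply: norm_intr_ge1.
  have := lerB_dist (c ^+ k) d; rewrite normrX normrM.
  have := normr_ge0 (c ^+ k - d); nra.
have [a_lt1|a_gt1] : `|a| < 1 \/ 1 < `|a|.
  by case: ltgtP a_neq1; [left | right |].
- have ai_gt1 : 1 < `|a^-1| by rewrite normrV ?unitfE // invf_gt1 ?normr_gt0.
  have [k0 ai_gt] := norm_expr_unbounded (C%:~R + `|b^-1|) ai_gt1.
  exists k0 => k /ai_gt; rewrite pow_sub_numEV // -opprB mulrN normrN.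
  apply: lower_bound; rewrite ?rpredM ?rpredX ?intr_int //.
  by rewrite mulf_neq0 ?expf_neq0 ?intr_eq0 ?numq_eq0.
- have [k0 a_gt] := norm_expr_unbounded (C%:~R + `|b|) a_gt1.
  exists k0 => k /a_gt; rewrite pow_sub_numE.
  apply: lower_bound; rewrite ?rpredM ?rpredX ?intr_int //.
  by rewrite mulf_neq0 ?expf_neq0 ?intr_eq0 ?denq_neq0.
Qed.

Lemma pow_sub_num_neq0 (a b : rat) (k : nat) : b != 0 -> mult_indep a b ->
  pow_sub_num a b k != 0.
Proof.
move=> b0 indep; rewrite -(intr_eq0 rat) pow_sub_numE !mulf_eq0 expf_eq0.
rewrite !intr_eq0 !denq_eq0 andbF /= subr_eq0; apply/eqP => akE.
by have [] := indep k%:Z (-1); rewrite // -exprnP akE exprN1 divff.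
Qed.

Lemma mult_indep_norm_neq1 (a b : rat) : mult_indep a b -> `|a| != 1.
Proof.
move=> indep; apply/eqP => a1.
have [] := indep 2 0; rewrite // expr0z mulr1 -exprnP.
by rewrite -(real_normK (num_real a)) a1 expr1n.
Qed.

Lemma intr_Fp_eq0 (p : nat) (z : int) : prime p ->
  ((z%:~R : 'F_p) == 0) = (p %| `|z|)%N.
Proof.
move=> pr_p; have char_p := pchar_Fp pr_p.
by case: z => n; rewrite ?NegzE ?mulrNz ?oppr_eq0 (dvdn_pcharf char_p).
Qed.

Lemma ordp_eq0 (p : nat) (x : rat) : prime p ->
  ~~ (p %| `|numq x|)%N -> ~~ (p %| `|denq x|)%N -> ordp p x = 0.
Proof. by move=> pr_p p_num p_den; rewrite /ordp !logn_coprime ?prime_coprime. Qed.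

Lemma redp_expr (p : nat) (a b : rat) (k : nat) : prime p ->
  ~~ (p %| `|denq a|)%N -> ~~ (p %| `|denq b|)%N ->
  (p %| `|pow_sub_num a b k|)%N ->
  redp p a ^+ k = redp p b.
Proof.
move=> pr_p p_da p_db p_X.
have da0 : (denq a)%:~R != 0 :> 'F_p by rewrite intr_Fp_eq0.
have db0 : (denq b)%:~R != 0 :> 'F_p by rewrite intr_Fp_eq0.
rewrite /redp expr_div_n; apply/eqP; rewrite eqr_div ?expf_neq0 //.
by move: p_X; rewrite -intr_Fp_eq0 // rmorphB !rmorphM !rmorphXn subr_eq0.
Qed.

Theorem theorem1 (a b : rat) :
  a != 0 -> b != 0 -> mult_indep a b ->
  forall N : nat, exists p : nat,
    [/\ (N <= p)%N, prime p, ordp p a = 0, ordp p b = 0 &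
        in_cyclic_subgroup (redp p a) (redp p b)].
Proof.
move=> a0 b0 indep N.
have numq_neq0 x : x != 0 -> numq x != 0 by rewrite numq_eq0.
have [k [p [pr_p le_Np p_abnd p_X]]] := exists_large_prime_dvd_pow_sub
  (numq_neq0 a a0) (denq_neq0 a) (numq_neq0 b b0) (denq_neq0 b) (coprime_num_den a) N
  (fun k => pow_sub_num_neq0 k b0 indep)
  (pow_sub_num_unbounded a0 b0 (mult_indep_norm_neq1 indep)).
move: p_abnd; rewrite !abszM !Euclid_dvdM // !negb_or.
move=> /andP[/andP[/andP[p_na p_da] p_nb] p_db].
exists p; split; rewrite ?ordp_eq0 //.
by exists k%:Z; rewrite -exprnP (redp_expr pr_p p_da p_db p_X).
Qed.
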